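(* Let $n\ge 4$, let $K'\subseteq[k]$ with $|K'|\ge n$, let $\pi$ assign to each $n$-element subset $S\subseteq[k]$ a string $\pi(S)$ of length $n$ that is an ordering of $S$, and suppose every $(n-1)$-element subset $R\subseteq K'$ is semi-frozen, with a fixed choice of semi-freezing function $h_R$ and wildcard index $w_R$. Let $Q\subseteq K'$ with $|Q|=n-2$, let $R,R'\subseteq K'$ be distinct $(n-1)$-element sets containing $Q$, let $r$ be the element of $R\setminus Q$ and $r'$ the element of $R'\setminus Q$. Suppose there exist distinct $q,q'\in Q$ with $h_R(q)\ne h_{R'}(q)$ and $h_R(q')\ne h_{R'}(q')$. Then, after possibly interchanging the names of $q$ and $q'$: (1) $h_R(q)=h_{R'}(r')$ and $h_R(r)=h_{R'}(q')$; (2) $h_R(q')=w_{R'}$ and $h_{R'}(q)=w_R$; (3) $h_R(q'')=h_{R'}(q'')$ for every $q''\in Q\setminus\{q,q'\}$.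
   Context: $[k]=\{1,\dots,k\}$; $\pi(S)[i]$ is the letter at position $i\in[n]$ of $\pi(S)$. For a set $R\subseteq[k]$, $\mathcal U_R$ is the set of all sets $S\subseteq[k]$ with $R\subset S$ and $|S|=|R|+1$. A set $R$ with $|R|=n-1$ is semi-frozen with semi-freezing function $h_R$ and wildcard index $w_R$ if $h_R:R\to[n]$ is one-to-one, $w_R$ is the unique index of $[n]$ not in the image of $h_R$, and for every $r\in R$ and every $S\in\mathcal U_R$, either $\pi(S)[h_R(r)]=r$ or $\pi(S)[w_R]=r$. *)

From mathcomp Require Import all_boot.
Set Implicit Arguments. Unset Strict Implicit. Unset Printing Implicit Defensive.

(* Letters of [k] are modelled by 'I_k, positions of [n] by 'I_n.
   An assignment pi maps every set S of letters to a string of length n,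
   i.e. a function 'I_n -> 'I_k giving the letter at each position. *)
Definition assignment (k n : nat) := {set 'I_k} -> 'I_n -> 'I_k.

Definition is_ordering_assignment (k n : nat) (pi : assignment k n) : Prop :=
  forall S : {set 'I_k}, #|S| = n ->
    injective (pi S) /\ [set pi S i | i : 'I_n] = S.

Definition U_ (k : nat) (R : {set 'I_k}) : {set {set 'I_k}} :=
  [set S : {set 'I_k} | (R \proper S) && (#|S| == #|R|.+1)].

Definition semi_frozen (k n : nat) (pi : assignment k n)
    (R : {set 'I_k}) (h : 'I_k -> 'I_n) (w : 'I_n) : Prop :=
  [/\ #|R| = n.-1,
      {in R &, injective h},
      (forall i : 'I_n, i \notin h @: R <-> i = w)
    & forall r, r \in R -> forall S, S \in U_ R ->
        pi S (h r) = r \/ pi S w = r].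

From mathcomp Require Import all_boot.
Set Implicit Arguments. Unset Strict Implicit. Unset Printing Implicit Defensive.

(* Let T := R ∪ R' = Q ∪ {r, r'}; it has n letters and lies in
   both U_R and U_R', so the single ordering P := pi(T) witnesses the
   semi-freezing conditions of R and of R' simultaneously.  Call x ∈ R
   "fixed" (for R) when P(h_R x) = x.  Otherwise P(w_R) = x, so at most one
   letter of R is unfixed; and an unfixed letter x is sent by P ∘ h_R outside
   R, since every other letter y of R already occupies position h_R y.
   Because P is injective, a letter of Q on which h_R and h_R' disagree is
   unfixed for R or for R'; hence of q, q' one (call it a) is the unfixed
   letter of R and the other (b) that of R'.  Everything else is fixed, and
   comparing positions through P gives the three claims: P(h_R a) = r' =
   P(h_R' r'), P(h_R r) = r = P(h_R' b), P(h_R b) = b = P(w_R'),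
   P(h_R' a) = a = P(w_R), and P(h_R q'') = q'' = P(h_R' q'') otherwise. *)

Lemma not_both_fixed (k n : nat) (P : 'I_n -> 'I_k) (h h' : 'I_k -> 'I_n)
    (x : 'I_k) :
  injective P -> h x != h' x -> P (h x) = x -> P (h' x) != x.
Proof.
move=> P_inj hxx' Phx.
by apply: contra_neq hxx' => Ph'x; apply: P_inj; rewrite Phx.
Qed.

Section OneSemiFrozenSet.

Variables (k n : nat) (P : 'I_n -> 'I_k).
Variables (R : {set 'I_k}) (h : 'I_k -> 'I_n) (w : 'I_n).
Hypothesis P_inj : injective P.
Hypothesis h_inj : {in R &, injective h}.
Hypothesis frozen : forall x, x \in R -> P (h x) = x \/ P w = x.

Lemma wildcard_of_unfixed x : x \in R -> P (h x) != x -> P w = x.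
Proof. by move=> xR; case: (frozen xR) => [-> | //]; rewrite eqxx. Qed.

Lemma fixed_besides_unfixed x y :
  x \in R -> P (h x) != x -> y \in R -> y != x -> P (h y) = y.
Proof.
move=> xR Phx yR; apply: contraNeq => Phy.
by rewrite -(wildcard_of_unfixed yR Phy) (wildcard_of_unfixed xR Phx).
Qed.

Lemma unfixed_image_notin x : x \in R -> P (h x) != x -> P (h x) \notin R.
Proof.
move=> xR Phx; apply/negP => PhxR.
have fixed_image := fixed_besides_unfixed xR Phx PhxR Phx.
by move/eqP: Phx; apply; apply: h_inj => //; apply: P_inj.
Qed.

End OneSemiFrozenSet.

Section TwoSemiFrozenSets.

Variables (k n : nat) (P : 'I_n -> 'I_k).
Variables (Q R R' : {set 'I_k}) (r r' : 'I_k).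
Variables (hR hR' : 'I_k -> 'I_n) (wR wR' : 'I_n).
Hypothesis P_inj : injective P.
Hypotheses (eR : R = r |: Q) (eR' : R' = r' |: Q).
Hypotheses (rQ : r \notin Q) (r'Q : r' \notin Q).
Hypothesis hR_inj : {in R &, injective hR}.
Hypothesis hR'_inj : {in R' &, injective hR'}.
Hypothesis frozenR : forall x, x \in R -> P (hR x) = x \/ P wR = x.
Hypothesis frozenR' : forall x, x \in R' -> P (hR' x) = x \/ P wR' = x.
Hypothesis P_range : forall i, P i \in R :|: R'.

Let QR x : x \in Q -> x \in R. Proof. by rewrite eR; apply: setU1r. Qed.
Let QR' x : x \in Q -> x \in R'. Proof. by rewrite eR'; apply: setU1r. Qed.

(* Each of two distinct disagreeing letters of Q is unfixed for R or R', and
   since each set has at most one unfixed letter they split between R and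
   R'. *)
Lemma unfixed_letters_split q q' :
  q \in Q -> q' \in Q -> q != q' -> hR q != hR' q -> hR q' != hR' q' ->
  exists a b : 'I_k,
    ((a == q) && (b == q') || (a == q') && (b == q)) /\
    [/\ a \in Q, b \in Q, a != b, P (hR a) != a & P (hR' b) != b].
Proof.
move=> qQ q'Q qq' hq hq'; have q'q : q' != q by rewrite eq_sym.
have [Pq | Pq] := eqVneq (P (hR q)) q.
- have P'q : P (hR' q) != q := not_both_fixed P_inj hq Pq.
  have P'q' : P (hR' q') = q' :=
    fixed_besides_unfixed frozenR' (QR' qQ) P'q (QR' q'Q) q'q.
  have Pq' : P (hR q') != q'.
    by apply: not_both_fixed P_inj _ P'q'; rewrite eq_sym.
  by exists q', q; rewrite !eqxx orbT.
- have Pq' : P (hR q') = q' :=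
    fixed_besides_unfixed frozenR (QR qQ) Pq (QR q'Q) q'q.
  have P'q' : P (hR' q') != q' := not_both_fixed P_inj hq' Pq'.
  by exists q, q'; rewrite !eqxx.
Qed.

Let outside_R y : y \in R :|: R' -> y \notin R -> y = r'.
Proof.
rewrite eR eR' !inE => /orP[-> // | /orP[/eqP -> // | yQ]].
by rewrite yQ !orbT.
Qed.

Let outside_R' y : y \in R :|: R' -> y \notin R' -> y = r.
Proof.
rewrite eR eR' !inE => /orP[/orP[/eqP -> // | yQ] | ->] //.
by rewrite yQ !orbT.
Qed.

Lemma positions_of_unfixed_letters a b :
  a \in Q -> b \in Q -> a != b -> P (hR a) != a -> P (hR' b) != b ->
  [/\ hR a = hR' r' /\ hR r = hR' b, hR b = wR' /\ hR' a = wR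
    & forall q'', q'' \in Q -> q'' != a -> q'' != b -> hR q'' = hR' q''].
Proof.
move=> aQ bQ ab Pa Pb.
have fixedR y : y \in R -> y != a -> P (hR y) = y :=
  fixed_besides_unfixed frozenR (QR aQ) Pa.
have fixedR' y : y \in R' -> y != b -> P (hR' y) = y :=
  fixed_besides_unfixed frozenR' (QR' bQ) Pb.
have ba : b != a by rewrite eq_sym.
have r'b : r' != b by apply: contraNneq r'Q => ->.
have ra : r != a by apply: contraNneq rQ => ->.
have r'R' : r' \in R' by rewrite eR' setU11.
have rR : r \in R by rewrite eR setU11.
have Pa_r' : P (hR a) = r'.
  apply: outside_R (P_range _) _.
  exact (unfixed_image_notin P_inj hR_inj frozenR (QR aQ) Pa).
have Pb_r : P (hR' b) = r.
  apply: outside_R' (P_range _) _.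
  exact (unfixed_image_notin P_inj hR'_inj frozenR' (QR' bQ) Pb).
split; [split | split | move=> x xQ xa xb]; apply: P_inj.
- by rewrite Pa_r' fixedR'.
- by rewrite Pb_r fixedR.
- by rewrite fixedR ?QR // (wildcard_of_unfixed frozenR' (QR' bQ) Pb).
- by rewrite fixedR' ?QR' // (wildcard_of_unfixed frozenR (QR aQ) Pa).
- by rewrite fixedR ?fixedR' ?QR ?QR'.
Qed.

End TwoSemiFrozenSets.

Lemma setU1_of_card (T : finType) (Q R : {set T}) (x : T) :
  Q \subset R -> x \in R :\: Q -> #|R| = #|Q|.+1 -> R = x |: Q.
Proof.
move=> QR; rewrite inE => /andP[xQ xR] cR; apply/eqP.
by rewrite eq_sym eqEcard subUset sub1set xR QR cardsU1 xQ cR add1n ltnSn.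
Qed.

Lemma setU1_in_U (k : nat) (R : {set 'I_k}) (x : 'I_k) :
  x \notin R -> x |: R \in U_ R.
Proof.
move=> xR; rewrite inE cardsU1 xR eqxx andbT.
by apply: properUr; rewrite sub1set.
Qed.

Lemma union_in_both_U (k : nat) (Q R R' : {set 'I_k}) (r r' : 'I_k) :
  R = r |: Q -> R' = r' |: Q -> r \notin Q -> r' \notin Q -> r != r' ->
  R :|: R' \in U_ R /\ R :|: R' \in U_ R'.
Proof.
move=> eR eR' rQ r'Q rr'.
have r'R : r' \notin R by rewrite eR !inE negb_or eq_sym rr'.
have rR' : r \notin R' by rewrite eR' !inE negb_or rr'.
have TR : R :|: R' = r' |: R.
  apply/setP => x; rewrite eR eR' !inE.
  by case: (x == r); case: (x == r'); case: (x \in Q).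
have TR' : R :|: R' = r |: R'.
  apply/setP => x; rewrite eR eR' !inE.
  by case: (x == r); case: (x == r'); case: (x \in Q).
by rewrite {1}TR TR' !setU1_in_U.
Qed.

Theorem lemma3p13 (k n : nat) (K' : {set 'I_k}) (pi : assignment k n)
  (h_ : {set 'I_k} -> 'I_k -> 'I_n) (w_ : {set 'I_k} -> 'I_n) :
  4 <= n ->
  n <= #|K'| ->
  is_ordering_assignment pi ->
  (forall R : {set 'I_k}, R \subset K' -> #|R| = n.-1 ->
     semi_frozen pi R (h_ R) (w_ R)) ->
  forall (Q R R' : {set 'I_k}) (r r' q q' : 'I_k),
  Q \subset K' -> #|Q| = n - 2 ->
  R \subset K' -> R' \subset K' -> #|R| = n.-1 -> #|R'| = n.-1 ->
  R != R' -> Q \subset R -> Q \subset R' ->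
  r \in R :\: Q -> r' \in R' :\: Q ->
  q \in Q -> q' \in Q -> q != q' ->
  h_ R q != h_ R' q -> h_ R q' != h_ R' q' ->
  exists a b : 'I_k,
    ((a == q) && (b == q') || (a == q') && (b == q)) /\
    [/\ h_ R a = h_ R' r' /\ h_ R r = h_ R' b,
        h_ R b = w_ R' /\ h_ R' a = w_ R
      & forall q'', q'' \in Q -> q'' != a -> q'' != b ->
          h_ R q'' = h_ R' q''].
Proof.
move=> n4 _ pi_ord frozen Q R R' r r' q q' _ cQ RK R'K cR cR' RR' QR QR'
  rRQ r'R'Q qQ q'Q qq' hq hq'.
have cQ1 : n.-1 = #|Q|.+1.
  by rewrite cQ -subSn ?subSS ?subn1 // (leq_trans _ n4).
have eR := setU1_of_card QR rRQ (etrans cR cQ1).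
have eR' := setU1_of_card QR' r'R'Q (etrans cR' cQ1).
have [rQ r'Q] : r \notin Q /\ r' \notin Q.
  by move: rRQ r'R'Q; rewrite !inE => /andP[-> _] /andP[-> _].
have rr' : r != r' by apply: contraNneq RR' => rr'; rewrite eR eR' rr'.
have [TU TU'] := union_in_both_U eR eR' rQ r'Q rr'.
have cT : #|R :|: R'| = n.
  move: TU; rewrite inE cR => /andP[_ /eqP ->].
  by rewrite prednK // (leq_trans _ n4).
have [P_inj P_im] := pi_ord _ cT.
have P_range i : pi (R :|: R') i \in R :|: R' by rewrite -{2}P_im imset_f.
have [_ hR_inj _ frozenR] := frozen R RK cR.
have [_ hR'_inj _ frozenR'] := frozen R' R'K cR'.
have frozenT x (xR : x \in R) := frozenR x xR _ TU.
have frozenT' x (xR' : x \in R') := frozenR' x xR' _ TU'.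
have [a [b [abqq' [aQ bQ ab Pa Pb]]]] :=
  unfixed_letters_split P_inj eR eR' frozenT frozenT' qQ q'Q qq' hq hq'.
exists a, b; split=> //.
exact: (positions_of_unfixed_letters P_inj eR eR' rQ r'Q hR_inj hR'_inj
  frozenT frozenT' P_range aQ bQ ab Pa Pb).
Qed.
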